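(* Let $l\subset\mathbb{R}$ be a compact set. (i) If $l$ is uniformly sparse, then $\overline{\dim}_{\mathrm B}\, l=0$. (ii) If $l$ is uniformly super sparse, then $\dim_{\mathrm A} l=0$. (iii) If $l$ is finite, then $l$ is uniformly super sparse. (iv) The converse of (i) fails: the set $l_0=\{0\}\cup\{2^{-k}:k\ge0\}$ satisfies $\overline{\dim}_{\mathrm B}\, l_0=0$ but is not sparse near $0$, hence not uniformly sparse.
   Context: For a compact set $l\subset\mathbb{R}$ let $W(l)=\{k\in\mathbb{N}: l\cap([2^{-k-1},2^{-k}]\cup[-2^{-k},-2^{-k-1}])\neq\emptyset\}$, and for $a\in l$ let $W(l,a)=W(l-a)$. $l$ is sparse near $a$ if $W(l,a)$ has upper natural density $\limsup_n \#(W(l,a)\cap[1,n])/n=0$. $l$ is uniformly sparse if for every $\delta>0$ there is $N_\delta$ with $\#(W(l,a)\cap[1,N])\le\delta N$ for all $a\in l$ and $N\ge N_\delta$; $l$ is uniformly super sparse if for every $\delta>0$ there is $N_\delta$ with $\#(W(l,a)\cap[k+1,k+N])\le\delta N$ for all $a\in l$, $k\in\mathbb{N}$ and $N\ge N_\delta$. $\overline{\dim}_{\mathrm B}$ is upper box dimension. The Assouad dimension $\dim_{\mathrm A}F$ is the infimum of $s\ge0$ such that there is $C>0$ with $N(B(x,R)\cap F,r)\le C(R/r)^s$ for all $0<r<R$ and $x\in F$, where $N(E,r)$ is the minimal number of intervals of length $r$ covering $E$. *)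

From Stdlib Require Import Reals Lra Lia List ClassicalEpsilon.
Open Scope R_scope.

Definition W (l : R -> Prop) (k : nat) : Prop :=
  exists x, l x /\
    ((/ 2 ^ (S k) <= x <= / 2 ^ k) \/ (- / 2 ^ k <= x <= - / 2 ^ (S k))).

Definition shift (l : R -> Prop) (a : R) : R -> Prop := fun y => l (y + a).
Definition Wa (l : R -> Prop) (a : R) : nat -> Prop := W (shift l a).

(* cnt P k N = #(P ∩ [k+1, k+N]) *)
Fixpoint cnt (P : nat -> Prop) (k N : nat) : nat :=
  match N with
  | O => O
  | S m => (cnt P k m + (if excluded_middle_informative (P (k + S m)%nat) then 1 else 0))%nat
  end.

(* l sparse near a: upper natural density of W(l,a) is 0
   (limsup of a nonnegative sequence is 0 iff eventually <= delta) *)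
Definition sparse_near (l : R -> Prop) (a : R) : Prop :=
  forall delta, delta > 0 -> exists N0 : nat, forall n : nat, (N0 <= n)%nat ->
    INR (cnt (Wa l a) 0 n) <= delta * INR n.

Definition uniformly_sparse (l : R -> Prop) : Prop :=
  forall delta, delta > 0 -> exists Nd : nat, forall a, l a -> forall N : nat, (Nd <= N)%nat ->
    INR (cnt (Wa l a) 0 N) <= delta * INR N.

Definition uniformly_super_sparse (l : R -> Prop) : Prop :=
  forall delta, delta > 0 -> exists Nd : nat, forall a, l a -> forall k N : nat, (Nd <= N)%nat ->
    INR (cnt (Wa l a) k N) <= delta * INR N.

Definition covered_by (E : R -> Prop) (r : R) (n : nat) : Prop :=
  exists cs : list R, length cs = n /\
    forall x, E x -> exists c, In c cs /\ c <= x <= c + r.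

Definition is_covnum (E : R -> Prop) (r : R) (n : nat) : Prop :=
  covered_by E r n /\ forall m, covered_by E r m -> (n <= m)%nat.

(* d = upper box dimension of E = limsup_{r -> 0+} log N(E,r) / (- log r) *)
Definition upper_box_dim_eq (E : R -> Prop) (d : R) : Prop :=
  (forall eps, eps > 0 -> exists r0, r0 > 0 /\
     forall r n, 0 < r < r0 -> is_covnum E r n -> ln (INR n) / (- ln r) <= d + eps) /\
  (forall eps, eps > 0 -> forall r0, r0 > 0 ->
     exists r n, 0 < r < r0 /\ is_covnum E r n /\ ln (INR n) / (- ln r) >= d - eps).

Definition assouad_ok (F : R -> Prop) (s : R) : Prop :=
  s >= 0 /\ exists C, C > 0 /\
    forall x r R0, F x -> 0 < r -> r < R0 ->
      forall n, is_covnum (fun y => Rabs (y - x) <= R0 /\ F y) r n ->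
        INR n <= C * Rpower (R0 / r) s.

Definition assouad_dim_eq (F : R -> Prop) (d : R) : Prop :=
  (forall s, assouad_ok F s -> d <= s) /\
  (forall eps, eps > 0 -> exists s, assouad_ok F s /\ s < d + eps).

Definition finite_set (l : R -> Prop) : Prop :=
  exists L : list R, forall x, l x <-> In x L.

Definition l0 : R -> Prop := fun x => x = 0 \/ exists k : nat, x = / 2 ^ k.

From Stdlib Require Import Reals Lra Lia List Classical ClassicalEpsilon.
Open Scope R_scope.

(* Write W(l, z) for the set of scales k at which l has a point at distance about 2^-k from z.
   To cover the part E of l within 2^-(a+1) of a point x of l by intervals of length 2^-(a+n),
   split E into its points within 2^-(a+2) of x, which form a ball one level down, and two
   half-annuli of diameter 2^-(a+2).  Every point z of a half-annulus sees x at scale a+1, so it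
   has one scale fewer left in its budget #(W(l, z) cap [a+1, a+n]).  The covering number with
   budget t therefore satisfies N(n+1, t) <= N(n, t) + 2 N(n, t-1), whence N(n, t) <= lam^n mu^t
   as soon as mu + 2 <= lam mu.  Uniform (super) sparseness gives budgets t <= N_delta + delta n,
   and lam = 2^(s/2), mu = 1 + 2/(lam - 1), delta = log lam / log mu turn the bound into C 2^(sn)
   for every s > 0, so both dimensions vanish.  A finite set meets at most three consecutive
   scales around each of its points; l0 has only log(1/r) covering numbers, yet W(l0, 0) = N. *)

(** * Counting scales in a window *)

Lemma cnt_le P k N : (cnt P k N <= N)%nat.
Proof. induction N as [|N IH]; simpl; [lia|]. destruct excluded_middle_informative; lia. Qed.

Lemma cnt_mono (P Q : nat -> Prop) k N :
  (forall j, P j -> Q j) -> (cnt P k N <= cnt Q k N)%nat.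
Proof.
  intros PQ; induction N as [|N IH]; simpl; [lia|].
  destruct (excluded_middle_informative (P _)), (excluded_middle_informative (Q _));
    try lia; exfalso; auto.
Qed.

Lemma cnt_all (P : nat -> Prop) k N : (forall j, P j) -> cnt P k N = N.
Proof.
  intros HP; induction N as [|N IH]; simpl; [reflexivity|].
  destruct excluded_middle_informative as [_|nP]; [lia|]. exfalso; apply nP, HP.
Qed.

Lemma cnt_split P k i j : cnt P k (i + j) = (cnt P k i + cnt P (k + i) j)%nat.
Proof.
  induction j as [|j IH]; [rewrite Nat.add_0_r; simpl; lia|].
  rewrite Nat.add_succ_r; simpl. rewrite IH.
  replace (k + S (i + j))%nat with (k + i + S j)%nat by lia. lia.
Qed.

Lemma cnt_first P k n : cnt P k (S n) = (cnt P k 1 + cnt P (S k) n)%nat.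
Proof. rewrite <- (Nat.add_1_l n), <- (Nat.add_1_r k). apply cnt_split. Qed.

Lemma cnt_succ P k n : P (S k) -> (S (cnt P (S k) n) <= cnt P k (S n))%nat.
Proof.
  intros HP. rewrite cnt_first. simpl.
  destruct excluded_middle_informative as [_|nP]; [lia|].
  exfalso; apply nP; rewrite Nat.add_1_r; exact HP.
Qed.

Lemma cnt_succ_le P k n : (cnt P (S k) n <= cnt P k (S n))%nat.
Proof. rewrite cnt_first. lia. Qed.

Lemma cnt_or (P Q : nat -> Prop) k N :
  (cnt (fun j => P j \/ Q j) k N <= cnt P k N + cnt Q k N)%nat.
Proof.
  induction N as [|N IH]; simpl; [lia|].
  destruct (excluded_middle_informative (_ \/ _)) as [[]|];
    destruct (excluded_middle_informative (P _)), (excluded_middle_informative (Q _));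
    try lia; exfalso; tauto.
Qed.

Lemma cnt_zero (P : nat -> Prop) k N :
  (forall j, (1 <= j <= N)%nat -> ~ P (k + j)%nat) -> cnt P k N = 0%nat.
Proof.
  induction N as [|N IH]; intros HP; simpl; [reflexivity|].
  rewrite IH by (intros j Hj; apply HP; lia).
  destruct excluded_middle_informative as [Pj|]; [|reflexivity].
  exfalso; apply (HP (S N)); [lia|exact Pj].
Qed.

Lemma cnt_eq_le1 h k N : (cnt (fun j => j = h) k N <= 1)%nat.
Proof.
  induction N as [|N IH]; simpl; [lia|].
  destruct excluded_middle_informative as [e|]; [|lia].
  rewrite cnt_zero; [lia|]. intros j Hj; lia.
Qed.

Lemma cnt_In_le (js : list nat) k N : (cnt (fun j => In j js) k N <= length js)%nat.
Proof.
  induction js as [|h js IH]; simpl.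
  - rewrite cnt_zero; [lia|]. intros j _ [].
  - pose proof (cnt_or (fun j => h = j) (fun j => In j js) k N).
    pose proof (cnt_mono (fun j => h = j) (fun j => j = h) k N (fun j e => eq_sym e)).
    pose proof (cnt_eq_le1 h k N). lia.
Qed.

Lemma Rle_div_iff a b r : 0 < r -> (a <= b / r <-> a * r <= b).
Proof.
  intros Hr. unfold Rdiv. split; intros H.
  - apply Rmult_le_compat_r with (r := r) in H; [|lra].
    rewrite Rmult_assoc, Rinv_l, Rmult_1_r in H by lra. exact H.
  - apply Rmult_le_reg_r with r; [exact Hr|]. rewrite Rmult_assoc, Rinv_l, Rmult_1_r by lra.
    exact H.
Qed.

Lemma Rdiv_le_iff a b r : 0 < r -> (a / r <= b <-> a <= b * r).
Proof.
  intros Hr. unfold Rdiv. split; intros H.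
  - apply Rmult_le_compat_r with (r := r) in H; [|lra].
    rewrite Rmult_assoc, Rinv_l, Rmult_1_r in H by lra. exact H.
  - apply Rmult_le_reg_r with r; [exact Hr|]. rewrite Rmult_assoc, Rinv_l, Rmult_1_r by lra.
    exact H.
Qed.

Lemma Rinv_le_iff x y : 0 < x -> (/ x <= y <-> 1 <= y * x).
Proof. intros Hx. rewrite <- Rdiv_1_l. apply Rdiv_le_iff, Hx. Qed.

Lemma ln_0 : ln 0 = 0.
Proof.
  unfold ln. destruct (Rlt_dec 0 0) as [H|_]; [exact (False_ind _ (Rlt_irrefl 0 H))|].
  reflexivity.
Qed.

Lemma ln_le a b : 0 < a -> a <= b -> ln a <= ln b.
Proof. intros Ha [Hab| ->]; [left; apply ln_increasing; lra|lra]. Qed.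

Lemma ln_INR_nonneg n : 0 <= ln (INR n).
Proof.
  destruct n as [|n]; [simpl; rewrite ln_0; lra|].
  rewrite <- ln_1. apply ln_le; [lra|]. rewrite S_INR. pose proof (pos_INR n). lra.
Qed.

Lemma inv_pow2_pos k : 0 < / 2 ^ k.
Proof. apply Rinv_0_lt_compat, pow_lt; lra. Qed.

Lemma inv_pow2_S k : / 2 ^ S k = / 2 ^ k / 2.
Proof. simpl. pose proof (pow_lt 2 k). field. lra. Qed.

Lemma inv_pow2_le k k' : (k <= k')%nat -> / 2 ^ k' <= / 2 ^ k.
Proof.
  intros Hk. apply Rinv_le_contravar; [apply pow_lt; lra|]. apply Rle_pow; [lra|exact Hk].
Qed.

Definition in_band (k : nat) (d : R) : Prop := / 2 ^ S k <= Rabs d <= / 2 ^ k.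

Lemma Wa_band l a k : Wa l a k <-> exists y, l y /\ in_band k (y - a).
Proof.
  unfold Wa, W, shift, in_band. pose proof (inv_pow2_pos (S k)).
  split.
  - intros [x [Hx Hband]]. exists (x + a). replace (x + a - a) with x by ring.
    split; [exact Hx|].
    destruct Hband; [rewrite Rabs_right | rewrite Rabs_left]; lra.
  - intros [y [Hy Hband]]. exists (y - a). replace (y - a + a) with y by ring.
    split; [exact Hy|].
    destruct (Rcase_abs (y - a)); [rewrite Rabs_left in Hband | rewrite Rabs_right in Hband];
      lra.
Qed.

Lemma in_band_close i j d : in_band i d -> in_band j d -> (j <= S i)%nat.
Proof.
  unfold in_band; intros Hi Hj. apply Nat.nlt_ge; intros Hij.
  pose proof (inv_pow2_le (S (S i)) j Hij). rewrite inv_pow2_S in Hj.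
  pose proof (inv_pow2_S (S i)). pose proof (inv_pow2_pos (S i)). lra.
Qed.

Lemma pow2_floor X : 1 <= X -> exists b, 2 ^ b <= X < 2 ^ S b.
Proof.
  intros HX. destruct (INR_archimed 1 X) as [N HN]; [lra|]. rewrite Rmult_1_r in HN.
  assert (HXN : X < 2 ^ N).
  { pose proof (poly N 1 Rlt_0_1). replace (1 + 1) with 2 in * by ring. lra. }
  clear HN. induction N as [|N IH]; [simpl in HXN; lra|].
  destruct (Rlt_or_le X (2 ^ N)) as [HX'|HX']; [exact (IH HX')|exists N; auto].
Qed.

Lemma dyadic_level r : 0 < r -> exists n, / 2 ^ n <= r /\ 2 ^ n <= Rmax 1 (2 / r).
Proof.
  intros Hr. destruct (Rle_or_lt 1 r) as [Hr1|Hr1].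
  - exists 0%nat; simpl. rewrite Rinv_1. split; [lra|apply Rmax_l].
  - destruct (pow2_floor (/ r)) as [b [Hb1 Hb2]].
    { rewrite <- Rinv_1. apply Rinv_le_contravar; lra. }
    exists (S b). pose proof (pow_lt 2 (S b)). split.
    + rewrite <- (Rinv_inv r). apply Rinv_le_contravar; [|lra]. apply Rinv_0_lt_compat; lra.
    + apply Rle_trans with (2 / r); [|apply Rmax_r]. simpl. unfold Rdiv. lra.
Qed.

(** * Interval covers *)

Lemma covered_by_mono (A B : R -> Prop) r r' m :
  covered_by A r m -> r <= r' -> (forall z, B z -> A z) -> covered_by B r' m.
Proof.
  intros [cs [Hlen Hcov]] Hr HBA. exists cs; split; [exact Hlen|].
  intros x Hx. destruct (Hcov x (HBA x Hx)) as [c [Hc Hxc]]. exists c; split; [exact Hc|lra].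
Qed.

Lemma covered_by_union (A B C : R -> Prop) r m1 m2 :
  covered_by A r m1 -> covered_by B r m2 -> (forall z, C z -> A z \/ B z) ->
  covered_by C r (m1 + m2).
Proof.
  intros [cs1 [Hlen1 Hcov1]] [cs2 [Hlen2 Hcov2]] HC. exists (cs1 ++ cs2); split.
  - rewrite length_app; lia.
  - intros x Hx. destruct (HC x Hx) as [HA|HB].
    + destruct (Hcov1 x HA) as [c [Hc Hxc]]. exists c; split; [apply in_or_app; auto|exact Hxc].
    + destruct (Hcov2 x HB) as [c [Hc Hxc]]. exists c; split; [apply in_or_app; auto|exact Hxc].
Qed.

Lemma covered_by_empty (A : R -> Prop) r : (forall z, ~ A z) -> covered_by A r 0.
Proof. intros HA; exists nil; split; [reflexivity|]. intros x Hx; destruct (HA x Hx). Qed.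

Lemma covered_by_ball (E : R -> Prop) x rho :
  (forall z, E z -> Rabs (z - x) <= rho) -> covered_by E (2 * rho) 1.
Proof.
  intros HE. exists ((x - rho) :: nil); split; [reflexivity|].
  intros z Hz. exists (x - rho); split; [left; reflexivity|].
  pose proof (HE z Hz) as Hzx. unfold Rabs in Hzx; destruct Rcase_abs; lra.
Qed.

Lemma covered_by_nonempty (P : R -> Prop) r M :
  0 <= M -> (forall y, P y -> exists m, covered_by P r m /\ INR m <= M) ->
  exists m, covered_by P r m /\ INR m <= M.
Proof.
  intros HM HP. destruct (classic (exists y, P y)) as [[y Hy]|Hnone].
  - exact (HP y Hy).
  - exists 0%nat; split; [|simpl; exact HM].
    apply covered_by_empty; intros z Hz; apply Hnone; exists z; exact Hz.
Qed.

Lemma covered_by_pieces (E : R -> Prop) (P : nat -> R -> Prop) K r M :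
  (forall z, E z -> exists i, (i < K)%nat /\ P i z) ->
  (forall i, exists m, covered_by (P i) r m /\ INR m <= M) ->
  exists m, covered_by E r m /\ INR m <= INR K * M.
Proof.
  revert E; induction K as [|K IH]; intros E HE HP.
  - exists 0%nat; split; [|simpl; lra].
    apply covered_by_empty; intros z Hz. destruct (HE z Hz) as [i [Hi _]]; lia.
  - destruct (IH (fun z => E z /\ exists i, (i < K)%nat /\ P i z)) as [m1 [Hc1 Hm1]].
    { intros z [_ Hz]; exact Hz. }
    { exact HP. }
    destruct (HP K) as [m2 [Hc2 Hm2]].
    exists (m1 + m2)%nat; split.
    + apply (covered_by_union _ _ _ _ _ _ Hc1 Hc2). intros z Hz.
      destruct (HE z Hz) as [i [Hi Hiz]]. destruct (Nat.eq_dec i K) as [->|HiK]; [now right|].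
      left; split; [exact Hz|]. exists i; split; [lia|exact Hiz].
    + rewrite plus_INR, S_INR. lra.
Qed.

Lemma nat_floor t : 0 <= t -> exists i, INR i <= t < INR i + 1.
Proof.
  intros Ht. destruct (INR_archimed 1 t) as [N HN]; [lra|]. rewrite Rmult_1_r in HN.
  induction N as [|N IH]; [simpl in HN; lra|].
  rewrite S_INR in HN. destruct (Rlt_or_le t (INR N)) as [HtN|HtN]; [exact (IH HtN)|].
  exists N; lra.
Qed.

Lemma bounded_grid (E : R -> Prop) w :
  bounded E -> 0 < w ->
  exists lo K, forall z, E z ->
    exists i, (i < K)%nat /\ lo + INR i * w <= z <= lo + INR i * w + w.
Proof.
  intros [lo [hi Hb]] Hw. destruct (INR_archimed w (hi - lo)) as [K HK]; [exact Hw|].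
  exists lo, K; intros z Hz. destruct (Hb z Hz) as [Hlo Hhi].
  destruct (nat_floor ((z - lo) / w)) as [i [Hi1 Hi2]].
  { apply Rmult_le_pos; [lra|left; apply Rinv_0_lt_compat; exact Hw]. }
  apply Rmult_le_compat_r with (r := w) in Hi1; [|lra].
  apply Rmult_lt_compat_r with (r := w) in Hi2; [|lra].
  unfold Rdiv in Hi1, Hi2. rewrite Rmult_assoc, Rinv_l, Rmult_1_r in Hi1, Hi2 by lra.
  exists i; split; [|lra]. apply INR_lt. nra.
Qed.

Lemma bounded_covered_by (E : R -> Prop) r : bounded E -> 0 < r -> exists m, covered_by E r m.
Proof.
  intros Hb Hr. destruct (bounded_grid E r Hb Hr) as [lo [K HK]].
  destruct (covered_by_pieces E (fun i z => lo + INR i * r <= z <= lo + INR i * r + r) K r 1 HK)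
    as [m [Hm _]]; [|exists m; exact Hm].
  intros i. exists 1%nat; split; [|simpl; lra].
  exists ((lo + INR i * r) :: nil); split; [reflexivity|].
  intros z Hz; exists (lo + INR i * r); split; [left|]; auto.
Qed.

Lemma covnum_exists (E : R -> Prop) r m : covered_by E r m -> exists n, is_covnum E r n.
Proof.
  intros Hm. destruct (Wf_nat.dec_inh_nat_subset_has_unique_least_element
                         (covered_by E r) (fun n => classic _) (ex_intro _ m Hm))
    as [n [[Hn Hmin] _]].
  exists n; split; [exact Hn|exact Hmin].
Qed.

(** * The covering recursion *)

Section BallCover.

Variable l : R -> Prop.
Variables lam mu : R.
Hypothesis mu_ge1 : 1 <= mu.
Hypothesis mu_add2_le : mu + 2 <= lam * mu.

Definition ball_cover_bound (n : nat) : Prop :=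
  forall a t x (E : R -> Prop), 0 <= t -> l x ->
  (forall z, E z -> l z /\ Rabs (z - x) <= / 2 ^ S a) ->
  (forall z, E z -> INR (cnt (Wa l z) a n) <= t) ->
  exists m, covered_by E (/ 2 ^ (a + n)) m /\ INR m <= lam ^ n * Rpower mu t.

Lemma lam_gt0 : 0 < lam.
Proof. nra. Qed.

Lemma cover_weight_ge0 n t : 0 <= lam ^ n * Rpower mu t.
Proof.
  apply Rmult_le_pos; [apply pow_le; pose proof lam_gt0; lra|].
  left; apply exp_pos.
Qed.

Lemma ball_cover_bound_0 : ball_cover_bound 0.
Proof.
  intros a t x E Ht _ HE _. exists 1%nat; split.
  - apply (covered_by_mono E E (2 * / 2 ^ S a)); [|rewrite inv_pow2_S, Nat.add_0_r; lra|auto].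
    apply (covered_by_ball E x). intros z Hz; apply HE, Hz.
  - simpl INR. rewrite pow_O, Rmult_1_l. rewrite <- (Rpower_O mu) at 1 by lra.
    apply Rle_Rpower; lra.
Qed.

Lemma band_cover n a t (P : R -> Prop) :
  ball_cover_bound n ->
  (forall z, P z -> l z) ->
  (forall y z, P y -> P z -> Rabs (z - y) <= / 2 ^ S (S a)) ->
  (forall z, P z -> INR (cnt (Wa l z) (S a) n) + 1 <= t) ->
  exists m, covered_by P (/ 2 ^ (S a + n)) m /\ INR m <= lam ^ n * Rpower mu (t - 1).
Proof.
  intros IH Hl Hclose Hcnt. apply covered_by_nonempty; [apply cover_weight_ge0|].
  intros y Hy. apply (IH (S a) (t - 1) y P).
  - pose proof (pos_INR (cnt (Wa l y) (S a) n)). pose proof (Hcnt y Hy). lra.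
  - exact (Hl y Hy).
  - intros z Hz; split; [exact (Hl z Hz)|exact (Hclose y z Hy Hz)].
  - intros z Hz; pose proof (Hcnt z Hz); lra.
Qed.

Lemma ball_cover_bound_S n : ball_cover_bound n -> ball_cover_bound (S n).
Proof.
  intros IH a t x E Ht Hx HE Hcnt. set (rho := / 2 ^ S (S a)).
  assert (Hrho : / 2 ^ S a = 2 * rho)
    by (unfold rho; rewrite (inv_pow2_S (S a)); field; apply pow_nonzero; lra).
  assert (Hrho0 : 0 < rho) by apply inv_pow2_pos.
  rewrite Hrho in HE. rewrite <- Nat.add_succ_comm.
  (* points at distance more than [rho] from [x] see [x] at scale [S a] *)
  assert (Hfar : forall z, E z -> rho < Rabs (z - x) ->
                 INR (cnt (Wa l z) (S a) n) + 1 <= t).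
  { intros z Hz Hzx. rewrite <- S_INR. apply Rle_trans with (2 := Hcnt z Hz).
    apply le_INR, cnt_succ, Wa_band. exists x; split; [exact Hx|].
    unfold in_band. rewrite Rabs_minus_sym, Hrho. fold rho. pose proof (proj2 (HE z Hz)). lra. }
  destruct (IH (S a) t x (fun z => E z /\ Rabs (z - x) <= rho)) as [m1 [Hc1 Hm1]];
    [exact Ht|exact Hx| | |].
  { intros z [Hz Hzx]; split; [apply HE, Hz|exact Hzx]. }
  { intros z [Hz _]. apply Rle_trans with (2 := Hcnt z Hz), le_INR, cnt_succ_le. }
  assert (Hside : forall side : bool, exists m,
    covered_by (fun z => E z /\ rho < (if side then z - x else x - z)) (/ 2 ^ (S a + n)) m /\
    INR m <= lam ^ n * Rpower mu (t - 1)).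
  { intros side. apply band_cover; [exact IH| | |].
    - intros z [Hz _]; apply HE, Hz.
    - intros y z [Hy Hyx] [Hz Hzx]. pose proof (proj2 (HE y Hy)). pose proof (proj2 (HE z Hz)).
      fold rho; destruct side; unfold Rabs in *; repeat destruct Rcase_abs; lra.
    - intros z [Hz Hzx]. apply Hfar; [exact Hz|].
      destruct side; unfold Rabs; destruct Rcase_abs; lra. }
  destruct (Hside true) as [m2 [Hc2 Hm2]], (Hside false) as [m3 [Hc3 Hm3]].
  exists (m1 + (m2 + m3))%nat; split.
  - apply (covered_by_union _ _ _ _ _ _ Hc1 (covered_by_union _ _ _ _ _ _ Hc2 Hc3 (fun z H => H))).
    intros z Hz. destruct (Rle_or_lt (Rabs (z - x)) rho); [left; now split|right].
    unfold Rabs in *; destruct Rcase_abs; [right|left]; split; auto; lra.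
  - assert (Hmu : Rpower mu t = Rpower mu (t - 1) * mu).
    { replace t with (t - 1 + 1) at 1 by ring. rewrite Rpower_plus, Rpower_1 by lra.
      reflexivity. }
    rewrite Hmu in *. rewrite !plus_INR. simpl pow.
    pose proof (cover_weight_ge0 n (t - 1)). nra.
Qed.

Lemma ball_cover n : ball_cover_bound n.
Proof. induction n; [exact ball_cover_bound_0|exact (ball_cover_bound_S n IHn)]. Qed.

End BallCover.

(** * Covers of sparse sets *)

Definition lam_of (s : R) : R := Rpower 2 (s / 2).
Definition mu_of (s : R) : R := 1 + 2 / (lam_of s - 1).
Definition delta_of (s : R) : R := ln (lam_of s) / ln (mu_of s).

Section Exponents.

Variable s : R.
Hypothesis s_pos : 0 < s.

Lemma lam_of_gt1 : 1 < lam_of s.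
Proof. unfold lam_of. rewrite <- (Rpower_O 2) by lra. apply Rpower_lt; lra. Qed.

Lemma mu_of_gt1 : 1 < mu_of s.
Proof.
  pose proof lam_of_gt1. unfold mu_of.
  enough (0 < 2 / (lam_of s - 1)) by lra. apply Rdiv_lt_0_compat; lra.
Qed.

Lemma mu_of_add2_le : mu_of s + 2 <= lam_of s * mu_of s.
Proof.
  pose proof lam_of_gt1.
  assert ((lam_of s - 1) * mu_of s = lam_of s + 1) by (unfold mu_of; field; lra). lra.
Qed.

Lemma delta_of_pos : 0 < delta_of s.
Proof.
  unfold delta_of. pose proof lam_of_gt1. pose proof mu_of_gt1.
  apply Rdiv_lt_0_compat; rewrite <- ln_1; apply ln_increasing; lra.
Qed.

Lemma lam_of_pow_budget n Nd :
  lam_of s ^ n * Rpower (mu_of s) (INR Nd + delta_of s * INR n) =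
  Rpower (mu_of s) (INR Nd) * Rpower (2 ^ n) s.
Proof.
  pose proof lam_of_gt1. pose proof mu_of_gt1.
  assert (Hln : 0 < ln (mu_of s)) by (rewrite <- ln_1; apply ln_increasing; lra).
  assert (Hdelta : Rpower (mu_of s) (delta_of s * INR n) = lam_of s ^ n).
  { rewrite <- Rpower_pow by lra. unfold Rpower, delta_of. f_equal. field. lra. }
  rewrite Rpower_plus, Hdelta, <- (Rpower_pow n 2) by lra.
  unfold lam_of. rewrite <- Rpower_pow by apply exp_pos. rewrite !Rpower_mult.
  replace (INR n * s) with (s / 2 * INR n + s / 2 * INR n) by field.
  rewrite Rpower_plus. ring.
Qed.

End Exponents.

Lemma count_budget (c : nat -> nat) Nd d :
  0 <= d -> (forall n, (c n <= n)%nat) -> (forall n, (Nd <= n)%nat -> INR (c n) <= d * INR n) ->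
  forall n, INR (c n) <= INR Nd + d * INR n.
Proof.
  intros Hd Hc HNd n. pose proof (pos_INR Nd). pose proof (pos_INR n).
  destruct (Nat.le_gt_cases Nd n) as [Hn|Hn].
  - pose proof (HNd n Hn). nra.
  - apply le_INR in Hn. pose proof (le_INR _ _ (Hc n)). rewrite S_INR in Hn. nra.
Qed.

Lemma sparse_ball_cover l s Nd a n x (E : R -> Prop) :
  0 < s ->
  (forall z, l z -> INR (cnt (Wa l z) a n) <= INR Nd + delta_of s * INR n) ->
  l x -> (forall z, E z -> l z /\ Rabs (z - x) <= / 2 ^ S a) ->
  exists m, covered_by E (/ 2 ^ (a + n)) m /\
            INR m <= Rpower (mu_of s) (INR Nd) * Rpower (2 ^ n) s.
Proof.
  intros Hs Hcnt Hx HE. rewrite <- (lam_of_pow_budget s Hs).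
  pose proof (mu_of_gt1 s Hs). pose proof (delta_of_pos s Hs).
  apply (ball_cover l (lam_of s) (mu_of s) ltac:(lra) (mu_of_add2_le s Hs) n a _ x E);
    [|exact Hx|exact HE|].
  - pose proof (pos_INR Nd). pose proof (pos_INR n). nra.
  - intros z Hz. apply Hcnt, HE, Hz.
Qed.

Lemma sparse_bounded_cover l :
  bounded l ->
  exists K : nat, forall s Nd n (E : R -> Prop), 0 < s ->
    (forall z, l z -> INR (cnt (Wa l z) 0 n) <= INR Nd + delta_of s * INR n) ->
    (forall z, E z -> l z) ->
    exists m, covered_by E (/ 2 ^ n) m /\
              INR m <= INR K * (Rpower (mu_of s) (INR Nd) * Rpower (2 ^ n) s).
Proof.
  intros Hb. destruct (bounded_grid l (/ 2) Hb ltac:(lra)) as [lo [K HK]].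
  exists K; intros s Nd n E Hs Hcnt HEl.
  apply (covered_by_pieces E (fun i z => E z /\ lo + INR i * / 2 <= z <= lo + INR i * / 2 + / 2)).
  { intros z Hz. destruct (HK z (HEl z Hz)) as [i [Hi Hiz]]. exists i; auto. }
  intros i. apply covered_by_nonempty.
  { apply Rmult_le_pos; left; apply exp_pos. }
  intros y [Hy Hiy]. apply (sparse_ball_cover l s Nd 0 n y); auto.
  intros z [Hz Hiz]. split; [exact (HEl z Hz)|]. simpl. apply Rabs_le. lra.
Qed.

(** * Dimension criteria *)

Lemma Rpower_inv_large C s :
  0 < s -> exists r1, 0 < r1 /\ forall r, 0 < r < r1 -> C <= Rpower (/ r) s.
Proof.
  intros Hs. set (C' := Rmax C 1). assert (HC' : 1 <= C') by apply Rmax_r.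
  assert (Hp : 0 < Rpower C' (/ s)) by apply exp_pos.
  exists (/ Rpower C' (/ s)); split; [apply Rinv_0_lt_compat, Hp|]. intros r [Hr Hr1].
  apply Rle_trans with C'; [apply Rmax_l|].
  rewrite <- (Rpower_1 C') at 1 by lra. replace 1 with (/ s * s) by (field; lra).
  rewrite <- Rpower_mult. apply Rle_Rpower_l; [lra|split; [exact Hp|]].
  rewrite <- (Rinv_inv (Rpower C' (/ s))). apply Rinv_le_contravar; [exact Hr|lra].
Qed.

Lemma ln_ratio_le n r eps :
  0 <= eps -> 0 < r < 1 -> INR n <= Rpower (/ r) eps -> ln (INR n) / (- ln r) <= eps.
Proof.
  intros Heps Hr Hn. assert (Hlnr : ln r < 0) by (rewrite <- ln_1; apply ln_increasing; lra).
  apply Rdiv_le_iff; [lra|].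
  destruct n as [|n]; [simpl; rewrite ln_0; nra|].
  apply ln_le in Hn; [|rewrite S_INR; pose proof (pos_INR n); lra].
  rewrite ln_Rpower, ln_Rinv in Hn by lra. lra.
Qed.

Lemma upper_box_dim_eq_0 (E : R -> Prop) :
  bounded E ->
  (forall s, 0 < s -> exists C, forall r n, 0 < r < 1 -> is_covnum E r n ->
     INR n <= C * Rpower (/ r) s) ->
  upper_box_dim_eq E 0.
Proof.
  intros Hb Hpow. split.
  - intros eps Heps. destruct (Hpow (eps / 2) ltac:(lra)) as [C HC].
    destruct (Rpower_inv_large C (eps / 2) ltac:(lra)) as [r1 [Hr1 HCr]].
    exists (Rmin 1 r1); split; [apply Rmin_glb_lt; lra|]. intros r n [Hr Hrr] Hn.
    assert (r < 1) by (pose proof (Rmin_l 1 r1); lra).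
    assert (r < r1) by (pose proof (Rmin_r 1 r1); lra).
    rewrite Rplus_0_l. apply ln_ratio_le; [lra|lra|].
    set (P := Rpower (/ r) (eps / 2)). assert (HP : 0 < P) by apply exp_pos.
    replace (Rpower (/ r) eps) with (P * P)
      by (unfold P; rewrite <- Rpower_plus; f_equal; field).
    apply Rle_trans with (1 := HC r n ltac:(lra) Hn).
    apply Rmult_le_compat_r; [lra|apply HCr; lra].
  - intros eps Heps r0 Hr0. set (r := Rmin (r0 / 2) (/ 2)).
    assert (Hr : 0 < r) by (apply Rmin_glb_lt; lra).
    assert (r <= r0 / 2) by apply Rmin_l. assert (r <= / 2) by apply Rmin_r.
    destruct (bounded_covered_by E r Hb Hr) as [m Hm].
    destruct (covnum_exists E r m Hm) as [n Hn].
    exists r, n. split; [lra|split; [exact Hn|]].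
    assert (ln r < 0) by (rewrite <- ln_1; apply ln_increasing; lra).
    pose proof (Rle_mult_inv_pos _ (- ln r) (ln_INR_nonneg n) ltac:(lra)). unfold Rdiv. lra.
Qed.

Lemma assouad_dim_eq_0 (F : R -> Prop) :
  (forall s, 0 < s -> assouad_ok F s) -> assouad_dim_eq F 0.
Proof.
  intros Hok. split; [intros s [Hs _]; lra|].
  intros eps Heps. exists (eps / 2); split; [apply Hok|]; lra.
Qed.

Lemma uniformly_sparse_box_dim l : compact l -> uniformly_sparse l -> upper_box_dim_eq l 0.
Proof.
  intros Hc Hsp. pose proof (compact_P1 l Hc) as Hb.
  destruct (sparse_bounded_cover l Hb) as [K HK].
  apply (upper_box_dim_eq_0 l Hb). intros s Hs.
  destruct (Hsp (delta_of s) (delta_of_pos s Hs)) as [Nd HNd].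
  exists (INR K * Rpower (mu_of s) (INR Nd) * Rpower 2 s). intros r n0 Hr Hn0.
  destruct (dyadic_level r ltac:(lra)) as [n [Hn1 Hn2]].
  rewrite Rmax_right in Hn2 by (apply Rle_div_iff; lra).
  destruct (HK s Nd n l Hs) as [m [Hm HmK]]; [|tauto|].
  { intros z Hz. apply (count_budget (cnt (Wa l z) 0)); [pose proof (delta_of_pos s Hs); lra| |].
    - intros; apply cnt_le.
    - intros N HN; exact (HNd z Hz N HN). }
  apply Rle_trans with (INR m).
  { apply le_INR, (proj2 Hn0), (covered_by_mono l l _ _ _ Hm Hn1); tauto. }
  assert (H2n : Rpower (2 ^ n) s <= Rpower 2 s * Rpower (/ r) s).
  { rewrite Rpower_mult_distr by (try apply Rinv_0_lt_compat; lra).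
    apply Rle_Rpower_l; [lra|split; [apply pow_lt; lra|exact Hn2]]. }
  assert (0 <= INR K * Rpower (mu_of s) (INR Nd))
    by (apply Rmult_le_pos; [apply pos_INR|left; apply exp_pos]).
  apply Rle_trans with (1 := HmK). rewrite <- Rmult_assoc, (Rmult_assoc _ (Rpower 2 s)).
  apply Rmult_le_compat_l; assumption.
Qed.

Lemma small_ball_cover l s Nd x r R0 :
  0 < s ->
  (forall z, l z -> forall k n, INR (cnt (Wa l z) k n) <= INR Nd + delta_of s * INR n) ->
  l x -> 0 < r < R0 -> R0 <= / 2 ->
  exists m, covered_by (fun y => Rabs (y - x) <= R0 /\ l y) r m /\
            INR m <= Rpower (mu_of s) (INR Nd) * Rpower (8 * (R0 / r)) s.
Proof.
  intros Hs Hcnt Hx Hr HR.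
  destruct (pow2_floor (/ (2 * R0))) as [a [Ha1 Ha2]].
  { rewrite <- Rinv_1. apply Rinv_le_contravar; lra. }
  set (p := 2 ^ a) in *. assert (Hp : 0 < p) by (apply pow_lt; lra).
  assert (HpR : R0 <= / 2 ^ S a).
  { simpl; fold p. rewrite <- Rdiv_1_l, Rle_div_iff by lra.
    rewrite <- Rdiv_1_l, Rle_div_iff in Ha1 by lra. lra. }
  assert (HpR' : 1 < 4 * R0 * p).
  { simpl in Ha2; fold p in Ha2. apply Rmult_lt_compat_r with (r := 2 * R0) in Ha2; [|lra].
    rewrite Rinv_l in Ha2 by lra. lra. }
  destruct (dyadic_level (r * p)) as [n [Hn1 Hn2]]; [nra|].
  set (q := 2 ^ n) in *. assert (Hq : 0 < q) by (apply pow_lt; lra).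
  assert (Hq8 : q <= 8 * (R0 / r)).
  { apply Rle_trans with (1 := Hn2), Rmax_lub.
    - apply Rmult_le_reg_r with r; [lra|]. unfold Rdiv. field_simplify; lra.
    - apply Rdiv_le_iff; [nra|]. unfold Rdiv. field_simplify; nra. }
  destruct (sparse_ball_cover l s Nd a n x (fun y => Rabs (y - x) <= R0 /\ l y) Hs)
    as [m [Hm HmC]]; [intros z Hz; apply Hcnt, Hz|exact Hx| |].
  { intros z [Hzx Hz]; split; [exact Hz|lra]. }
  exists m; split.
  - apply (covered_by_mono _ _ _ _ _ Hm); [|tauto].
    rewrite pow_add; fold p q. apply Rinv_le_iff; [nra|].
    apply Rinv_le_iff in Hn1; [nra|exact Hq].
  - apply Rle_trans with (1 := HmC). apply Rmult_le_compat_l; [left; apply exp_pos|].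
    apply Rle_Rpower_l; [lra|]. fold q. lra.
Qed.

Lemma large_ball_cover l s Nd :
  bounded l -> 0 < s ->
  (forall z, l z -> forall n, INR (cnt (Wa l z) 0 n) <= INR Nd + delta_of s * INR n) ->
  exists K : nat, forall x r R0, 0 < r < R0 -> / 2 < R0 ->
    exists m, covered_by (fun y => Rabs (y - x) <= R0 /\ l y) r m /\
              INR m <= INR K * Rpower (mu_of s) (INR Nd) * Rpower (8 * (R0 / r)) s.
Proof.
  intros Hb Hs Hcnt. destruct (sparse_bounded_cover l Hb) as [K HK].
  exists K; intros x r R0 Hr HR.
  destruct (dyadic_level r ltac:(lra)) as [n [Hn1 Hn2]].
  assert (Hn8 : 2 ^ n <= 8 * (R0 / r)).
  { apply Rle_trans with (1 := Hn2), Rmax_lub;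
      apply Rmult_le_reg_r with r; try lra; unfold Rdiv; field_simplify; lra. }
  destruct (HK s Nd n (fun y => Rabs (y - x) <= R0 /\ l y) Hs (fun z Hz => Hcnt z Hz n))
    as [m [Hm HmK]]; [tauto|].
  exists m; split; [apply (covered_by_mono _ _ _ _ _ Hm Hn1); tauto|].
  apply Rle_trans with (1 := HmK). rewrite Rmult_assoc.
  apply Rmult_le_compat_l; [apply pos_INR|].
  apply Rmult_le_compat_l; [left; apply exp_pos|].
  apply Rle_Rpower_l; [lra|split; [apply pow_lt; lra|exact Hn8]].
Qed.

Lemma uniformly_super_sparse_assouad_dim l :
  compact l -> uniformly_super_sparse l -> assouad_dim_eq l 0.
Proof.
  intros Hc Hsp. pose proof (compact_P1 l Hc) as Hb.
  apply assouad_dim_eq_0. intros s Hs. split; [lra|].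
  destruct (Hsp (delta_of s) (delta_of_pos s Hs)) as [Nd HNd].
  assert (Hcnt : forall z, l z -> forall k n,
            INR (cnt (Wa l z) k n) <= INR Nd + delta_of s * INR n).
  { intros z Hz k. apply (count_budget (cnt (Wa l z) k)); [pose proof (delta_of_pos s Hs); lra| |].
    - intros; apply cnt_le.
    - intros N HN; exact (HNd z Hz k N HN). }
  destruct (large_ball_cover l s Nd Hb Hs (fun z Hz => Hcnt z Hz 0%nat)) as [K HK].
  set (A := Rpower (mu_of s) (INR Nd)). assert (HA : 0 < A) by apply exp_pos.
  exists ((INR K + 1) * A * Rpower 8 s). pose proof (pos_INR K).
  assert (H8 : 0 < Rpower 8 s) by apply exp_pos. split; [repeat apply Rmult_lt_0_compat; lra|].
  intros x r R0 Hx Hr HrR n0 Hn0.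
  assert (HP : 0 < Rpower (R0 / r) s) by apply exp_pos.
  assert (Hsplit : Rpower (8 * (R0 / r)) s = Rpower 8 s * Rpower (R0 / r) s)
    by (rewrite Rpower_mult_distr; [reflexivity|lra|apply Rdiv_lt_0_compat; lra]).
  set (Q := A * Rpower 8 s * Rpower (R0 / r) s).
  assert (HQ : 0 < Q) by (unfold Q; repeat apply Rmult_lt_0_compat; assumption).
  replace ((INR K + 1) * A * Rpower 8 s * Rpower (R0 / r) s) with ((INR K + 1) * Q)
    by (unfold Q; ring).
  destruct (Rle_or_lt R0 (/ 2)) as [HR|HR].
  - destruct (small_ball_cover l s Nd x r R0 Hs Hcnt Hx (conj Hr HrR) HR) as [m [Hm HmA]].
    apply Rle_trans with (INR m); [apply le_INR, (proj2 Hn0 m Hm)|].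
    fold A in HmA. rewrite Hsplit, <- Rmult_assoc in HmA. fold Q in HmA. nra.
  - destruct (HK x r R0 (conj Hr HrR) HR) as [m [Hm HmA]].
    apply Rle_trans with (INR m); [apply le_INR, (proj2 Hn0 m Hm)|].
    fold A in HmA. rewrite Hsplit, <- !Rmult_assoc in HmA.
    replace (INR K * A * Rpower 8 s * Rpower (R0 / r) s) with (INR K * Q) in HmA
      by (unfold Q; ring).
    nra.
Qed.

Lemma band_scales (L : list R) a :
  exists js : list nat, (length js <= 3 * length L)%nat /\
    forall k y, In y L -> in_band k (y - a) -> In k js.
Proof.
  induction L as [|y L [js [Hlen Hjs]]]; [exists nil; split; [simpl; lia|intros k y []]|].
  destruct (classic (exists k0, in_band k0 (y - a))) as [[k0 Hk0]|Hnone].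
  - exists ((k0 - 1)%nat :: k0 :: S k0 :: js); split; [simpl in *; lia|].
    intros k y' [<-|Hy'] Hk; [|right; right; right; exact (Hjs k y' Hy' Hk)].
    pose proof (in_band_close k0 k _ Hk0 Hk). pose proof (in_band_close k k0 _ Hk Hk0).
    assert (k = (k0 - 1)%nat \/ k = k0 \/ k = S k0) as [-> | [-> | ->]] by lia; simpl; auto.
  - exists js; split; [simpl; lia|].
    intros k y' [<-|Hy'] Hk; [exfalso; apply Hnone; exists k; exact Hk|exact (Hjs k y' Hy' Hk)].
Qed.

Lemma finite_super_sparse l : finite_set l -> uniformly_super_sparse l.
Proof.
  intros [L HL] d Hd. destruct (INR_archimed d (INR (3 * length L)) Hd) as [Nd HNd].
  exists Nd; intros a Ha k N HN. destruct (band_scales L a) as [js [Hlen Hjs]].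
  assert (Hcnt : (cnt (Wa l a) k N <= 3 * length L)%nat).
  { apply (Nat.le_trans _ (cnt (fun j => In j js) k N)); [|pose proof (cnt_In_le js k N); lia].
    apply cnt_mono. intros j Hj. apply Wa_band in Hj as [y [Hy Hband]].
    exact (Hjs j y (proj1 (HL y) Hy) Hband). }
  apply le_INR in Hcnt, HN. nra.
Qed.

Lemma l0_every_band j : Wa l0 0 j.
Proof.
  apply Wa_band. exists (/ 2 ^ j). split; [right; exists j; reflexivity|].
  unfold in_band. rewrite Rminus_0_r, Rabs_right by (left; apply inv_pow2_pos).
  pose proof (inv_pow2_le j (S j) (Nat.le_succ_diag_r j)). lra.
Qed.

Lemma l0_not_sparse_near : ~ sparse_near l0 0.
Proof.
  intros Hsp. destruct (Hsp (/ 2) ltac:(lra)) as [N0 HN0].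
  specialize (HN0 (S N0) (Nat.le_succ_diag_r N0)).
  rewrite cnt_all in HN0 by exact l0_every_band.
  rewrite S_INR in HN0. pose proof (pos_INR N0). lra.
Qed.

Lemma l0_not_uniformly_sparse : ~ uniformly_sparse l0.
Proof.
  intros Hsp. apply l0_not_sparse_near. intros d Hd. destruct (Hsp d Hd) as [Nd HNd].
  exists Nd. apply HNd. left; reflexivity.
Qed.

Lemma l0_covered_by n : covered_by l0 (/ 2 ^ n) (S n).
Proof.
  exists (0 :: map (fun k => / 2 ^ k) (seq 0 n)).
  split; [simpl; rewrite length_map, length_seq; reflexivity|].
  pose proof (inv_pow2_pos n).
  intros x [->|[k ->]]; [exists 0; split; [left|]; auto; lra|].
  destruct (Nat.le_gt_cases n k) as [Hk|Hk].
  - exists 0; split; [left; reflexivity|].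
    pose proof (inv_pow2_le n k Hk). pose proof (inv_pow2_pos k). lra.
  - exists (/ 2 ^ k); split; [right; apply (in_map (fun k => / 2 ^ k)), in_seq; lia|lra].
Qed.

Lemma linear_le_pow x n : 1 < x -> INR n + 1 <= (1 + / (x - 1)) * x ^ n.
Proof.
  intros Hx. pose proof (poly n (x - 1) ltac:(lra)) as Hpoly.
  replace (1 + (x - 1)) with x in Hpoly by ring.
  assert (Hn : INR n <= (x ^ n - 1) * / (x - 1)).
  { apply Rmult_le_reg_r with (x - 1); [lra|]. rewrite Rmult_assoc, Rinv_l by lra. lra. }
  pose proof (Rinv_0_lt_compat (x - 1) ltac:(lra)). pose proof (pow_R1_Rle x n ltac:(lra)). nra.
Qed.

Lemma l0_box_dim : upper_box_dim_eq l0 0.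
Proof.
  apply upper_box_dim_eq_0.
  { exists 0, 1. intros x [->|[k ->]]; [lra|]. pose proof (inv_pow2_le 0 k (Nat.le_0_l k)).
    pose proof (inv_pow2_pos k). simpl in *. lra. }
  intros s Hs. set (x := Rpower 2 s).
  assert (Hx : 1 < x) by (unfold x; rewrite <- (Rpower_O 2) by lra; apply Rpower_lt; lra).
  exists ((1 + / (x - 1)) * x). intros r n0 Hr Hn0.
  destruct (dyadic_level r ltac:(lra)) as [n [Hn1 Hn2]].
  rewrite Rmax_right in Hn2 by (apply Rle_div_iff; lra).
  apply Rle_trans with (INR (S n)).
  { apply le_INR, (proj2 Hn0), (covered_by_mono _ _ _ _ _ (l0_covered_by n) Hn1); tauto. }
  rewrite S_INR. apply Rle_trans with (1 := linear_le_pow x n Hx).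
  rewrite Rmult_assoc. apply Rmult_le_compat_l.
  { pose proof (Rinv_0_lt_compat (x - 1) ltac:(lra)). lra. }
  assert (Hpow : x ^ n = Rpower (2 ^ n) s).
  { unfold x. rewrite <- Rpower_pow by apply exp_pos. rewrite <- (Rpower_pow n 2) by lra.
    rewrite !Rpower_mult, Rmult_comm. reflexivity. }
  rewrite Hpow. unfold x.
  rewrite Rpower_mult_distr by (try apply Rinv_0_lt_compat; lra).
  apply Rle_Rpower_l; [lra|split; [apply pow_lt; lra|exact Hn2]].
Qed.

Theorem proposition4p2 :
  (forall l : R -> Prop, compact l -> uniformly_sparse l -> upper_box_dim_eq l 0) /\
  (forall l : R -> Prop, compact l -> uniformly_super_sparse l -> assouad_dim_eq l 0) /\
  (forall l : R -> Prop, compact l -> finite_set l -> uniformly_super_sparse l) /\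
  (upper_box_dim_eq l0 0 /\ ~ sparse_near l0 0 /\ ~ uniformly_sparse l0).
Proof.
  split; [exact uniformly_sparse_box_dim|].
  split; [exact uniformly_super_sparse_assouad_dim|].
  split; [intros l _; exact (finite_super_sparse l)|].
  exact (conj l0_box_dim (conj l0_not_sparse_near l0_not_uniformly_sparse)).
Qed.
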